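(* (A weighted, repeated argument sum simplification.) For complex numbers $x_0,\dots,x_q$ (repetitions allowed), $q\ge0$, and $\tau\in\mathbb{R}$, $$\sum_{j=0}^q x_j\,e^{-\tau[x_0,\ldots,x_q,x_j]}=\Big(\tau\frac{\partial}{\partial\tau}-q\Big)e^{-\tau[x_0,\ldots,x_q]}.$$
   Context: For $t\in\mathbb{R}$ and numbers $y_0,\dots,y_p$ (repetitions allowed), $e^{t[y_0,\ldots,y_p]}$ denotes the divided difference of $f(x)=e^{tx}$, $f[y_0,\ldots,y_p]=\frac{1}{2\pi i}\oint_\Gamma\frac{f(x)}{\prod_{i=0}^p(x-y_i)}\,\mathrm{d}x$, $\Gamma$ a positively oriented contour enclosing all $y_i$. The multiset $[x_0,\ldots,x_q,x_j]$ contains $x_j$ twice. *)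

From Stdlib Require Import Reals List.
From Coquelicot Require Import Coquelicot.
Open Scope R_scope.

Definition cexp (z : C) : C :=
  (exp (Re z) * cos (Im z), exp (Re z) * sin (Im z)).

Definition node_poly (ys : list C) (x : C) : C :=
  fold_right (fun y acc => Cmult (Cminus x y) acc) (RtoC 1) ys.

(* Radius of the circular contour: strictly larger than every |y_i|. *)
Definition dd_radius (ys : list C) : R :=
  1 + fold_right (fun y acc => Cmod y + acc) 0 ys.

Definition circ (r th : R) : C := (r * cos th, r * sin th).

(* Divided difference via the contour integral
     f[y_0,...,y_p] = 1/(2 pi i) \oint_Gamma f(x) / prod_i (x - y_i) dx
   with Gamma the circle |x| = dd_radius ys (which encloses all nodes).
   Parametrizing x = gamma(th), dx = i gamma(th) dth, the factor i cancels:
     f[ys] = 1/(2 pi) \int_0^{2 pi} f(gamma th) gamma(th) / prod(gamma th - y_i) dth. *)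
Definition divdiff (f : C -> C) (ys : list C) : C :=
  let r := dd_radius ys in
  Cmult (RtoC (/ (2 * PI)))
    (@RInt C_R_CompleteNormedModule
       (fun th => Cdiv (Cmult (f (circ r th)) (circ r th))
                       (node_poly ys (circ r th)))
       0 (2 * PI)).

Definition exp_dd (t : R) (ys : list C) : C :=
  divdiff (fun x => cexp (Cmult (RtoC t) x)) ys.

(* Write [k(z) = e^(-tau z) z / P(z)] with [P(z) = prod_i (z - x_i)], so that
   [e^(-tau[x_0..x_q])] is the mean of [k] over a circle around the nodes and the
   [tau]-derivative of [k] is [-z k(z)]. Appending [x_j] divides [k] by [z - x_j], and since
   [x_j / (z - x_j) = z / (z - x_j) - 1], the logarithmic derivative of [P] gives
     [sum_j x_j k(z) / (z - x_j) = k(z) (z P'(z) / P(z) - q - 1)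
                                 = tau (-z k(z)) - q k(z) - z k'(z)].
   The last term has zero mean over the circle, because [d/dth k(r e^(i th)) = i z k'(z)].
   The divided differences are defined with contours whose radius depends on the list of
   nodes, so we also use that the circle integral of a function holomorphic outside the
   nodes does not depend on the radius. *)

From Stdlib Require Import Reals List Lra Lia.
From Coquelicot Require Import Coquelicot.
Open Scope R_scope.

(* Coquelicot states many equations at the carrier of a structure on [C], which [ring]
   does not recognise as [C]; the ring structure on [C] also has no division. *)
Ltac C_ring :=
  cbv beta; try unfold Cdiv; match goal with |- ?a = ?b => change (@eq C a b) end; ring.
Ltac C_field :=
  cbv beta; match goal with |- ?a = ?b => change (@eq C a b) end; field.

Lemma Copp_Ci_mult_Ci (z : C) : (- Ci * (Ci * z) = z)%C.
Proof. destruct z. unfold Ci, Cmult, Copp. simpl. f_equal; ring. Qed.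

Lemma Cminus_0_r (z : C) : (z - 0)%C = z.
Proof. C_ring. Qed.

Lemma sum_n_C_Sn (a : nat -> C) n : sum_n a (S n) = (sum_n a n + a (S n))%C.
Proof. exact (sum_Sn a n). Qed.

Lemma sum_n_Cmult_l (c : C) (a : nat -> C) n :
  sum_n (fun j => c * a j)%C n = (c * sum_n a n)%C.
Proof. exact (sum_n_mult_l c a n). Qed.

(** * Derivatives of complex-valued functions of a real variable *)

Definition is_derive_C (f : R -> C) (t : R) (l : C) :=
  @is_derive R_AbsRing C_R_NormedModule f t l.

Lemma is_derive_R_val (f : R -> R) t (l l' : R) :
  is_derive f t l -> l = l' -> is_derive f t l'.
Proof. now intros H <-. Qed.

(* Coquelicot's generic rules, specialised to [R -> R] so that they unify with [Rplus], [Rmult]. *)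
Lemma is_derive_Rplus (f g : R -> R) t a b :
  is_derive f t a -> is_derive g t b -> is_derive (fun s => f s + g s) t (a + b).
Proof. exact (is_derive_plus f g t a b). Qed.

Lemma is_derive_Rminus (f g : R -> R) t a b :
  is_derive f t a -> is_derive g t b -> is_derive (fun s => f s - g s) t (a - b).
Proof. exact (is_derive_minus f g t a b). Qed.

Lemma is_derive_Ropp (f : R -> R) t a : is_derive f t a -> is_derive (fun s => - f s) t (- a).
Proof. exact (is_derive_opp f t a). Qed.

Lemma is_derive_Rmult (f g : R -> R) t a b :
  is_derive f t a -> is_derive g t b ->
  is_derive (fun s => f s * g s) t (a * g t + f t * b).
Proof. intros Ha Hb. exact (is_derive_mult f g t a b Ha Hb Rmult_comm). Qed.

Lemma is_derive_Rcomp (h h' f : R -> R) t a :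
  (forall y, is_derive h y (h' y)) -> is_derive f t a ->
  is_derive (fun s => h (f s)) t (a * h' (f t)).
Proof. intros Hh Hf. exact (is_derive_comp h f t _ a (Hh (f t)) Hf). Qed.

Lemma is_derive_C_val (f : R -> C) t (l l' : C) :
  is_derive_C f t l -> l = l' -> is_derive_C f t l'.
Proof. now intros H <-. Qed.

Lemma is_derive_C_split (f : R -> C) t l :
  is_derive_C f t l <->
  is_derive (fun s => Re (f s)) t (Re l) /\ is_derive (fun s => Im (f s)) t (Im l).
Proof.
  split.
  - intros H. split.
    + eapply filterdiff_ext_lin.
      * apply (@filterdiff_comp' R_AbsRing R_NormedModule C_R_NormedModule R_NormedModule
                 f fst t _ fst H).
        apply filterdiff_linear, (@is_linear_fst R_AbsRing R_NormedModule R_NormedModule).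
      * reflexivity.
    + eapply filterdiff_ext_lin.
      * apply (@filterdiff_comp' R_AbsRing R_NormedModule C_R_NormedModule R_NormedModule
                 f snd t _ snd H).
        apply filterdiff_linear, (@is_linear_snd R_AbsRing R_NormedModule R_NormedModule).
      * reflexivity.
  - intros [H1 H2].
    assert (Hp := @filterdiff_comp'_2 R_AbsRing R_NormedModule R_NormedModule R_NormedModule
      C_R_NormedModule (fun s => Re (f s)) (fun s => Im (f s)) pair t _ _ pair H1 H2).
    eapply filterdiff_ext; [| eapply filterdiff_ext_lin; [apply Hp|]].
    + intros y. simpl. now destruct (f y).
    + apply filterdiff_linear.
      apply (is_linear_prod (K:=R_AbsRing)
               (T:=prod_NormedModule R_AbsRing R_NormedModule R_NormedModule) fst snd);
        [apply is_linear_fst | apply is_linear_snd].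
    + intros y. simpl. now destruct l.
Qed.

Lemma is_derive_C_const (c : C) t : is_derive_C (fun _ => c) t (RtoC 0).
Proof. rewrite is_derive_C_split. split; exact (is_derive_const _ t). Qed.

Lemma is_derive_C_RtoC (f : R -> R) t a :
  is_derive f t a -> is_derive_C (fun s => RtoC (f s)) t (RtoC a).
Proof. intros H. rewrite is_derive_C_split. split; [exact H | exact (is_derive_const _ t)]. Qed.

Lemma is_derive_C_plus f g t a b :
  is_derive_C f t a -> is_derive_C g t b -> is_derive_C (fun s => f s + g s)%C t (a + b)%C.
Proof.
  rewrite !is_derive_C_split. intros [Hf1 Hf2] [Hg1 Hg2]. split.
  - exact (is_derive_Rplus _ _ t _ _ Hf1 Hg1).
  - exact (is_derive_Rplus _ _ t _ _ Hf2 Hg2).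
Qed.

Lemma is_derive_C_mult f g t a b :
  is_derive_C f t a -> is_derive_C g t b ->
  is_derive_C (fun s => f s * g s)%C t (a * g t + f t * b)%C.
Proof.
  rewrite !is_derive_C_split. intros [Hf1 Hf2] [Hg1 Hg2]. split.
  - eapply is_derive_R_val.
    + exact (is_derive_Rminus _ _ t _ _ (is_derive_Rmult _ _ t _ _ Hf1 Hg1)
                                       (is_derive_Rmult _ _ t _ _ Hf2 Hg2)).
    + unfold Re, Im. simpl. ring.
  - eapply is_derive_R_val.
    + exact (is_derive_Rplus _ _ t _ _ (is_derive_Rmult _ _ t _ _ Hf1 Hg2)
                                      (is_derive_Rmult _ _ t _ _ Hf2 Hg1)).
    + unfold Re, Im. simpl. ring.
Qed.

(* [/ z] is [conj z / |z|^2]; each component is a product with the inverse of [|f|^2]. *)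
Lemma is_derive_C_inv f t a :
  is_derive_C f t a -> f t <> RtoC 0 ->
  is_derive_C (fun s => / f s)%C t (- (a / (f t * f t)))%C.
Proof.
  rewrite !is_derive_C_split. unfold Re, Im. intros [H1 H2] Hnz.
  set (N := fun s => fst (f s) * fst (f s) + snd (f s) * snd (f s)).
  assert (HN : N t <> 0).
  { unfold N. intros E. apply Hnz. destruct (f t) as [u v]. simpl in *.
    assert (u = 0) by nra. assert (v = 0) by nra. now subst. }
  assert (HN2 : (fst (f t) * fst (f t) - snd (f t) * snd (f t)) *
                (fst (f t) * fst (f t) - snd (f t) * snd (f t)) +
                (fst (f t) * snd (f t) + snd (f t) * fst (f t)) *
                (fst (f t) * snd (f t) + snd (f t) * fst (f t)) <> 0).
  { replace (_ + _) with (N t * N t) by (unfold N; ring).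
    now apply Rmult_integral_contrapositive. }
  assert (dinvN : is_derive (fun s => / N s) t
                    (- (2 * fst a * fst (f t) + 2 * snd a * snd (f t)) / N t ^ 2)).
  { apply is_derive_inv; [| exact HN]. unfold N.
    eapply is_derive_R_val.
    - apply is_derive_Rplus; apply is_derive_Rmult; eassumption.
    - cbv beta. ring. }
  split.
  - apply (is_derive_ext (fun s => fst (f s) * / N s)).
    { intros s. unfold N. simpl. unfold Rdiv. now rewrite !Rmult_1_r. }
    eapply is_derive_R_val.
    + apply (is_derive_Rmult (fun s => fst (f s))); eassumption.
    + unfold N in *. simpl. field. auto.
  - apply (is_derive_ext (fun s => - snd (f s) * / N s)).
    { intros s. unfold N. simpl. unfold Rdiv. now rewrite !Rmult_1_r. }
    eapply is_derive_R_val.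
    + apply (is_derive_Rmult (fun s => - snd (f s))); [apply is_derive_Ropp|]; eassumption.
    + unfold N in *. simpl. field. auto.
Qed.

Lemma is_derive_C_cexp p t a :
  is_derive_C p t a -> is_derive_C (fun s => cexp (p s)) t (a * cexp (p t))%C.
Proof.
  rewrite !is_derive_C_split. unfold cexp, Re, Im. intros [H1 H2]. simpl. split.
  - eapply is_derive_R_val.
    + apply (is_derive_Rmult (fun s => exp (fst (p s)))).
      * exact (is_derive_Rcomp exp exp _ t _ is_derive_exp H1).
      * exact (is_derive_Rcomp cos (fun y => - sin y) _ t _ is_derive_cos H2).
    + cbv beta. ring.
  - eapply is_derive_R_val.
    + apply (is_derive_Rmult (fun s => exp (fst (p s)))).
      * exact (is_derive_Rcomp exp exp _ t _ is_derive_exp H1).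
      * exact (is_derive_Rcomp sin cos _ t _ is_derive_sin H2).
    + cbv beta. ring.
Qed.

Definition continuity_2d_pt_C (P : R -> R -> C) (x y : R) :=
  continuity_2d_pt (fun u v => Re (P u v)) x y /\ continuity_2d_pt (fun u v => Im (P u v)) x y.

Lemma continuity_2d_pt_C_const (c : C) x y : continuity_2d_pt_C (fun _ _ => c) x y.
Proof. split; apply continuity_2d_pt_const. Qed.

Lemma continuity_2d_pt_C_RtoC (f : R -> R -> R) x y :
  continuity_2d_pt f x y -> continuity_2d_pt_C (fun u v => RtoC (f u v)) x y.
Proof. intros H. split; [exact H | exact (continuity_2d_pt_const x y 0)]. Qed.

Lemma continuity_2d_pt_C_plus P Q x y :
  continuity_2d_pt_C P x y -> continuity_2d_pt_C Q x y ->
  continuity_2d_pt_C (fun u v => P u v + Q u v)%C x y.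
Proof. intros [H1 H2] [H3 H4]. split; apply continuity_2d_pt_plus; assumption. Qed.

Lemma continuity_2d_pt_C_opp P x y :
  continuity_2d_pt_C P x y -> continuity_2d_pt_C (fun u v => - P u v)%C x y.
Proof. intros [H1 H2]. split; apply continuity_2d_pt_opp; assumption. Qed.

Lemma continuity_2d_pt_C_mult P Q x y :
  continuity_2d_pt_C P x y -> continuity_2d_pt_C Q x y ->
  continuity_2d_pt_C (fun u v => P u v * Q u v)%C x y.
Proof.
  intros [H1 H2] [H3 H4]. split.
  - apply continuity_2d_pt_minus; apply continuity_2d_pt_mult; assumption.
  - apply continuity_2d_pt_plus; apply continuity_2d_pt_mult; assumption.
Qed.

Lemma continuity_2d_pt_C_inv P x y :
  continuity_2d_pt_C P x y -> P x y <> RtoC 0 ->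
  continuity_2d_pt_C (fun u v => / P u v)%C x y.
Proof.
  intros [H1 H2] Hnz. unfold Re, Im in *.
  assert (HN : fst (P x y) ^ 2 + snd (P x y) ^ 2 <> 0).
  { intros E. apply Hnz. destruct (P x y) as [u v]. simpl in *.
    assert (u = 0) by nra. assert (v = 0) by nra. now subst. }
  assert (HinvN : continuity_2d_pt (fun u v => / (fst (P u v) ^ 2 + snd (P u v) ^ 2)) x y).
  { apply continuity_2d_pt_inv; [| exact HN].
    apply continuity_2d_pt_plus; apply continuity_2d_pt_mult; try assumption;
      apply continuity_2d_pt_mult; try assumption; apply continuity_2d_pt_const. }
  split; apply continuity_2d_pt_mult; try assumption.
  now apply continuity_2d_pt_opp.
Qed.

Lemma continuity_2d_pt_R_comp (h : R -> R) (f : R -> R -> R) x y :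
  (forall z, continuity_pt h z) -> continuity_2d_pt f x y ->
  continuity_2d_pt (fun u v => h (f u v)) x y.
Proof. intros Hh Hf. exact (continuity_1d_2d_pt_comp h f x y (Hh _) Hf). Qed.

Lemma continuity_2d_pt_C_cexp P x y :
  continuity_2d_pt_C P x y -> continuity_2d_pt_C (fun u v => cexp (P u v)) x y.
Proof.
  intros [H1 H2]. unfold Re, Im in *. split; simpl; apply continuity_2d_pt_mult;
    apply continuity_2d_pt_R_comp; try assumption.
  - apply derivable_continuous, derivable_exp.
  - apply derivable_continuous, derivable_cos.
  - apply derivable_continuous, derivable_exp.
  - apply derivable_continuous, derivable_sin.
Qed.

Lemma continuity_2d_pt_C_circ (f g : R -> R -> R) x y :
  continuity_2d_pt f x y -> continuity_2d_pt g x y ->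
  continuity_2d_pt_C (fun u v => circ (f u v) (g u v)) x y.
Proof.
  intros Hf Hg. split; simpl; apply continuity_2d_pt_mult; try assumption;
    apply continuity_2d_pt_R_comp; try assumption.
  - apply derivable_continuous, derivable_cos.
  - apply derivable_continuous, derivable_sin.
Qed.

(** * Holomorphic functions *)

(* [F'] is a complex derivative of [F] on [U], recorded through the two consequences used:
   the chain rule along differentiable real curves in [U] and continuity along
   continuous two-parameter families in [U]. *)
Definition holo_on (U : C -> Prop) (F F' : C -> C) :=
  (forall p t a, U (p t) -> is_derive_C p t a ->
     is_derive_C (fun s => F (p s)) t (a * F' (p t))%C) /\
  (forall P x y, U (P x y) -> continuity_2d_pt_C P x y ->
     continuity_2d_pt_C (fun u v => F (P u v)) x y /\
     continuity_2d_pt_C (fun u v => F' (P u v)) x y).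

Lemma holo_on_ext U F F' G' :
  holo_on U F F' -> (forall z, F' z = G' z) -> holo_on U F G'.
Proof.
  intros [H1 H2] E. split.
  - intros p t a Hu H. rewrite <- E. now apply H1.
  - intros P x y Hu H. destruct (H2 P x y Hu H) as [HF [HF1 HF2]]. split; [exact HF|].
    split; [revert HF1 | revert HF2]; apply continuity_2d_pt_ext; intros u v; now rewrite E.
Qed.

Lemma holo_on_id U : holo_on U (fun z => z) (fun _ => RtoC 1).
Proof.
  split.
  - intros p t a _ H. eapply is_derive_C_val; [exact H | C_ring].
  - intros P x y _ H. split; [exact H | apply continuity_2d_pt_C_const].
Qed.

Lemma holo_on_const U c : holo_on U (fun _ => c) (fun _ => RtoC 0).
Proof.
  split.
  - intros p t a _ _. eapply is_derive_C_val; [apply is_derive_C_const | C_ring].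
  - intros P x y _ _. split; apply continuity_2d_pt_C_const.
Qed.

Lemma holo_on_plus U F F' G G' :
  holo_on U F F' -> holo_on U G G' ->
  holo_on U (fun z => F z + G z)%C (fun z => F' z + G' z)%C.
Proof.
  intros [HF1 HF2] [HG1 HG2]. split.
  - intros p t a Hu H. eapply is_derive_C_val.
    + apply is_derive_C_plus; [apply HF1 | apply HG1]; eassumption.
    + C_ring.
  - intros P x y Hu H. destruct (HF2 P x y Hu H), (HG2 P x y Hu H).
    split; apply continuity_2d_pt_C_plus; assumption.
Qed.

Lemma holo_on_mult U F F' G G' :
  holo_on U F F' -> holo_on U G G' ->
  holo_on U (fun z => F z * G z)%C (fun z => F' z * G z + F z * G' z)%C.
Proof.
  intros [HF1 HF2] [HG1 HG2]. split.
  - intros p t a Hu H. eapply is_derive_C_val.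
    + apply is_derive_C_mult; [apply HF1 | apply HG1]; eassumption.
    + C_ring.
  - intros P x y Hu H. destruct (HF2 P x y Hu H), (HG2 P x y Hu H). split.
    + now apply continuity_2d_pt_C_mult.
    + apply continuity_2d_pt_C_plus; now apply continuity_2d_pt_C_mult.
Qed.

Lemma holo_on_inv U F F' :
  holo_on U F F' -> (forall z, U z -> F z <> RtoC 0) ->
  holo_on U (fun z => / F z)%C (fun z => - (F' z / (F z * F z)))%C.
Proof.
  intros [HF1 HF2] Hnz. split.
  - intros p t a Hu H. eapply is_derive_C_val.
    + apply is_derive_C_inv; [apply HF1 | apply Hnz]; eassumption.
    + C_ring.
  - intros P x y Hu H. destruct (HF2 P x y Hu H). split.
    + apply continuity_2d_pt_C_inv; auto.
    + apply continuity_2d_pt_C_opp, continuity_2d_pt_C_mult; [assumption|].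
      apply continuity_2d_pt_C_inv; [now apply continuity_2d_pt_C_mult|].
      apply Cmult_neq_0; auto.
Qed.

Lemma holo_on_comp U V G G' F F' :
  holo_on U G G' -> holo_on V F F' -> (forall z, U z -> V (G z)) ->
  holo_on U (fun z => F (G z)) (fun z => G' z * F' (G z))%C.
Proof.
  intros [HG1 HG2] [HF1 HF2] HUV. split.
  - intros p t a Hu H. eapply is_derive_C_val.
    + apply (HF1 (fun s => G (p s))); [exact (HUV _ Hu) | exact (HG1 p t a Hu H)].
    + C_ring.
  - intros P x y Hu H. destruct (HG2 P x y Hu H) as [HG HG'].
    destruct (HF2 (fun u v => G (P u v)) x y (HUV _ Hu) HG).
    split; [assumption | now apply continuity_2d_pt_C_mult].
Qed.

Lemma holo_on_cexp U : holo_on U cexp cexp.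
Proof.
  split.
  - intros p t a _ H. now apply is_derive_C_cexp.
  - intros P x y _ H. split; now apply continuity_2d_pt_C_cexp.
Qed.

(** * Integrals of complex-valued functions *)

Lemma continuity_pt_of_2d (f : R -> R -> R) r t :
  continuity_2d_pt f r t -> continuity_pt (f r) t.
Proof.
  intros H. apply continuity_pt_filterlim. intros Q [eps HQ].
  destruct (H eps) as [d Hd]. exists d. intros v Hv. apply HQ, Hd; [| exact Hv].
  rewrite Rminus_eq_0, Rabs_R0. apply cond_pos.
Qed.

Lemma continuous_C_of_parts (g : R -> C) t :
  continuity_pt (fun v => Re (g v)) t -> continuity_pt (fun v => Im (g v)) t ->
  @continuous R_UniformSpace C_UniformSpace g t.
Proof.
  intros H1 H2. apply continuity_pt_filterlim in H1, H2.
  assert (Hpair : continuous (fun c : R * R => (fst c, snd c)) (Re (g t), Im (g t))).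
  { apply (filterlim_ext (fun c => c)); [now intros [] | apply filterlim_id]. }
  assert (Hc := @continuous_comp_2 R_UniformSpace R_UniformSpace R_UniformSpace
     (prod_UniformSpace R_UniformSpace R_UniformSpace) _ _ pair t H1 H2 Hpair).
  unfold continuous. replace (g t) with (Re (g t), Im (g t)) by now destruct (g t).
  eapply filterlim_ext; [| exact Hc]. intros v. simpl. now destruct (g v).
Qed.

Lemma continuous_C_of_2d (P : R -> R -> C) r t :
  continuity_2d_pt_C P r t -> @continuous R_UniformSpace C_UniformSpace (P r) t.
Proof.
  intros [H1 H2]. apply continuous_C_of_parts.
  - exact (continuity_pt_of_2d (fun u v => Re (P u v)) r t H1).
  - exact (continuity_pt_of_2d (fun u v => Im (P u v)) r t H2).
Qed.

Lemma ex_RInt_C_of_2d (P : R -> R -> C) r a b :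
  (forall t, Rmin a b <= t <= Rmax a b -> continuity_2d_pt_C P r t) ->
  @ex_RInt C_R_NormedModule (P r) a b.
Proof.
  intros H. apply (@ex_RInt_continuous C_R_CompleteNormedModule).
  intros t Ht. now apply continuous_C_of_2d, H.
Qed.

Lemma RInt_C_split (g : R -> C) a b :
  @ex_RInt C_R_NormedModule g a b ->
  @RInt C_R_CompleteNormedModule g a b =
  (RInt (fun t => Re (g t)) a b, RInt (fun t => Im (g t)) a b).
Proof.
  intros H. apply (@RInt_correct C_R_CompleteNormedModule) in H.
  set (I := @RInt C_R_CompleteNormedModule g a b) in *.
  assert (H1 := @is_RInt_fct_extend_fst R_NormedModule R_NormedModule g a b I H).
  assert (H2 := @is_RInt_fct_extend_snd R_NormedModule R_NormedModule g a b I H).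
  apply (@is_RInt_unique R_CompleteNormedModule) in H1, H2.
  destruct I. simpl in *. now f_equal.
Qed.

Lemma is_derive_RInt_param_ball (f df : R -> R -> R) a b x d :
  0 < d ->
  (forall u t, Rabs (u - x) < d -> is_derive (fun u => f u t) u (df u t)) ->
  (forall t, Rmin a b <= t <= Rmax a b -> continuity_2d_pt df x t) ->
  (forall u, Rabs (u - x) < d -> ex_RInt (f u) a b) ->
  is_derive (fun u => RInt (f u) a b) x (RInt (df x) a b).
Proof.
  intros Hd Hder Hcont Hex.
  assert (Hx : Rabs (x - x) < d) by (now rewrite Rminus_eq_0, Rabs_R0).
  eapply is_derive_R_val.
  - apply is_derive_RInt_param.
    + exists (mkposreal d Hd). intros y Hy t _. eexists. now apply Hder.
    + intros t Ht. apply (continuity_2d_pt_ext_loc df); [| now apply Hcont].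
      exists (mkposreal d Hd). intros u v Hu _. symmetry. now apply is_derive_unique, Hder.
    + exists (mkposreal d Hd). exact Hex.
  - apply RInt_ext. intros t _. now apply is_derive_unique, Hder.
Qed.

Lemma is_derive_C_RInt_param (f df : R -> R -> C) a b x d :
  0 < d ->
  (forall u t, Rabs (u - x) < d -> is_derive_C (fun u => f u t) u (df u t)) ->
  (forall t, Rmin a b <= t <= Rmax a b -> continuity_2d_pt_C df x t) ->
  (forall u t, Rabs (u - x) < d -> Rmin a b <= t <= Rmax a b -> continuity_2d_pt_C f u t) ->
  is_derive_C (fun u => @RInt C_R_CompleteNormedModule (f u) a b) x
              (@RInt C_R_CompleteNormedModule (df x) a b).
Proof.
  intros Hd Hder Hcd Hcf.
  assert (Hex : forall u, Rabs (u - x) < d -> @ex_RInt C_R_NormedModule (f u) a b).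
  { intros u Hu. apply ex_RInt_C_of_2d. intros t Ht. now apply Hcf. }
  assert (Hexd : @ex_RInt C_R_NormedModule (df x) a b) by now apply ex_RInt_C_of_2d.
  assert (Hsplit : locally x (fun u => @RInt C_R_CompleteNormedModule (f u) a b =
    (RInt (fun t => Re (f u t)) a b, RInt (fun t => Im (f u t)) a b))).
  { exists (mkposreal d Hd). intros u Hu. now apply RInt_C_split, Hex. }
  rewrite is_derive_C_split, (RInt_C_split _ _ _ Hexd). split.
  - apply (is_derive_ext_loc (fun u => RInt (fun t => Re (f u t)) a b));
      [revert Hsplit; apply filter_imp; intros u ->; reflexivity |].
    apply (is_derive_RInt_param_ball _ (fun u t => Re (df u t)) a b x d Hd).
    + intros u t Hu. exact (proj1 (proj1 (is_derive_C_split _ _ _) (Hder u t Hu))).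
    + intros t Ht. exact (proj1 (Hcd t Ht)).
    + intros u Hu. destruct (Hex u Hu) as [l Hl]. exists (fst l).
      exact (@is_RInt_fct_extend_fst R_NormedModule R_NormedModule _ a b l Hl).
  - apply (is_derive_ext_loc (fun u => RInt (fun t => Im (f u t)) a b));
      [revert Hsplit; apply filter_imp; intros u ->; reflexivity |].
    apply (is_derive_RInt_param_ball _ (fun u t => Im (df u t)) a b x d Hd).
    + intros u t Hu. exact (proj2 (proj1 (is_derive_C_split _ _ _) (Hder u t Hu))).
    + intros t Ht. exact (proj2 (Hcd t Ht)).
    + intros u Hu. destruct (Hex u Hu) as [l Hl]. exists (snd l).
      exact (@is_RInt_fct_extend_snd R_NormedModule R_NormedModule _ a b l Hl).
Qed.

Lemma is_RInt_Cmult (c : C) (g : R -> C) a b l :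
  @is_RInt C_R_NormedModule g a b l ->
  @is_RInt C_R_NormedModule (fun t => c * g t)%C a b (c * l)%C.
Proof.
  intros H.
  assert (H1 := @is_RInt_fct_extend_fst R_NormedModule R_NormedModule g a b l H).
  assert (H2 := @is_RInt_fct_extend_snd R_NormedModule R_NormedModule g a b l H).
  apply (@is_RInt_fct_extend_pair R_NormedModule R_NormedModule).
  - apply (@is_RInt_minus R_NormedModule); now apply (@is_RInt_scal R_NormedModule).
  - apply (@is_RInt_plus R_NormedModule); now apply (@is_RInt_scal R_NormedModule).
Qed.

Lemma is_RInt_Cminus (f g : R -> C) a b If Ig :
  @is_RInt C_R_NormedModule f a b If -> @is_RInt C_R_NormedModule g a b Ig ->
  @is_RInt C_R_NormedModule (fun t => f t - g t)%C a b (If - Ig)%C.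
Proof. exact (@is_RInt_minus C_R_NormedModule f g a b If Ig). Qed.

Lemma is_RInt_C_sum (a : nat -> C) (h : nat -> R -> C) (l : nat -> C) q lo hi :
  (forall j, (j <= q)%nat -> @is_RInt C_R_NormedModule (h j) lo hi (l j)) ->
  @is_RInt C_R_NormedModule (fun t => sum_n (fun j => a j * h j t)%C q) lo hi
                           (sum_n (fun j => a j * l j)%C q).
Proof.
  induction q as [|q IH]; intros H.
  - apply (is_RInt_ext (fun t => a O * h O t)%C); [intros t _; now rewrite sum_O |].
    rewrite sum_O. apply is_RInt_Cmult, H. lia.
  - apply (is_RInt_ext (fun t => plus (sum_n (fun j => a j * h j t)%C q) (a (S q) * h (S q) t)%C));
      [intros t _; now rewrite sum_Sn |].
    rewrite sum_Sn. apply (@is_RInt_plus C_R_NormedModule).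
    + apply IH. intros j Hj. apply H. lia.
    + apply is_RInt_Cmult, H. lia.
Qed.

(** * Integrals over circles *)

Definition circle_int (F : C -> C) (r : R) : C :=
  @RInt C_R_CompleteNormedModule (fun th => F (circ r th)) 0 (2 * PI).

Lemma Cmod_circ r th : 0 <= r -> Cmod (circ r th) = r.
Proof.
  intros Hr. unfold Cmod, circ. simpl.
  replace (r * cos th * (r * cos th * 1) + r * sin th * (r * sin th * 1))
    with (r * r * (Rsqr (sin th) + Rsqr (cos th))) by (unfold Rsqr; ring).
  now rewrite sin2_cos2, Rmult_1_r, sqrt_square.
Qed.

Lemma circ_scale r th : circ r th = (r * circ 1 th)%C.
Proof. unfold circ, RtoC, Cmult. simpl. f_equal; ring. Qed.

Lemma circ_2PI r : circ r (2 * PI) = circ r 0.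
Proof. unfold circ. now rewrite cos_2PI, sin_2PI, cos_0, sin_0. Qed.

Lemma is_derive_C_circ_angle r th : is_derive_C (circ r) th (Ci * circ r th)%C.
Proof.
  rewrite is_derive_C_split. unfold circ, Ci, Re, Im. simpl. split; auto_derive; auto; ring.
Qed.

Lemma is_derive_C_circ_radius r th : is_derive_C (fun s => circ s th) r (circ 1 th).
Proof.
  rewrite is_derive_C_split. unfold circ, Re, Im. simpl. split; auto_derive; auto; ring.
Qed.

Lemma continuity_2d_pt_C_circ_id r th : continuity_2d_pt_C circ r th.
Proof.
  exact (continuity_2d_pt_C_circ (fun u _ => u) (fun _ v => v) r th
           (continuity_2d_pt_id1 r th) (continuity_2d_pt_id2 r th)).
Qed.

Lemma continuity_2d_pt_C_circ_fixed r x th : continuity_2d_pt_C (fun _ v => circ r v) x th.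
Proof.
  exact (continuity_2d_pt_C_circ (fun _ _ => r) (fun _ v => v) x th
           (continuity_2d_pt_const x th r) (continuity_2d_pt_id2 x th)).
Qed.

Lemma holo_on_circle_continuity U K K' r th :
  holo_on U K K' -> U (circ r th) ->
  continuity_2d_pt_C (fun u v => K (circ u v)) r th /\
  continuity_2d_pt_C (fun u v => K' (circ u v)) r th.
Proof. intros [_ HK] Hu. exact (HK circ r th Hu (continuity_2d_pt_C_circ_id r th)). Qed.

(* [d/dth K (r e^(i th)) = i z K'(z)] at [z = r e^(i th)], and [K (r e^(i th))] is
   [2 PI]-periodic. *)
Lemma is_RInt_circle_z_deriv U K K' r :
  holo_on U K K' -> (forall th, U (circ r th)) ->
  @is_RInt C_R_NormedModule (fun th => circ r th * K' (circ r th))%C 0 (2 * PI) (RtoC 0).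
Proof.
  intros HK HU.
  assert (Hi : @is_RInt C_R_NormedModule (fun th => Ci * circ r th * K' (circ r th))%C
                 0 (2 * PI) (minus (K (circ r (2 * PI))) (K (circ r 0)))).
  { apply (@is_RInt_derive C_R_CompleteNormedModule (fun th => K (circ r th))).
    - intros th _. apply (proj1 HK (circ r)); [apply HU | apply is_derive_C_circ_angle].
    - intros th _.
      apply (continuous_C_of_2d (fun u v => Ci * circ u v * K' (circ u v))%C r th).
      apply continuity_2d_pt_C_mult.
      + apply continuity_2d_pt_C_mult;
          [apply continuity_2d_pt_C_const | apply continuity_2d_pt_C_circ_id].
      + apply (holo_on_circle_continuity U K K'); [exact HK | apply HU]. }
  rewrite circ_2PI, minus_eq_zero in Hi. change zero with (RtoC 0) in Hi.
  apply (is_RInt_Cmult (- Ci)) in Hi.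
  replace (- Ci * RtoC 0)%C with (RtoC 0) in Hi by C_ring.
  eapply is_RInt_ext; [| exact Hi]. intros th _.
  cbv beta. now rewrite <- Cmult_assoc, Copp_Ci_mult_Ci.
Qed.

(* The radial derivative of the circle integral is [1/r] times the integral of
   [z K'(z)] over the circle, which vanishes. *)
Lemma circle_int_radius_indep U K K' m r1 r2 :
  0 <= m -> holo_on U K K' -> (forall r th, m < r -> U (circ r th)) ->
  m < r1 -> m < r2 -> circle_int K r1 = circle_int K r2.
Proof.
  intros Hm HK HU.
  assert (Hder : forall r, m < r -> is_derive_C (circle_int K) r (RtoC 0)).
  { intros r Hr. eapply is_derive_C_val.
    - apply (is_derive_C_RInt_param (fun u th => K (circ u th))
               (fun u th => circ 1 th * K' (circ u th))%C 0 (2 * PI) r (r - m)).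
      + lra.
      + intros u th Hu. apply (proj1 HK (fun s => circ s th)).
        * apply HU. apply Rabs_def2 in Hu. lra.
        * apply is_derive_C_circ_radius.
      + intros th _. apply continuity_2d_pt_C_mult.
        * apply continuity_2d_pt_C_circ_fixed.
        * apply (holo_on_circle_continuity U K K'); [exact HK | apply HU, Hr].
      + intros u th Hu _. apply (holo_on_circle_continuity U K K'); [exact HK |].
        apply HU. apply Rabs_def2 in Hu. lra.
    - apply (@is_RInt_unique C_R_CompleteNormedModule).
      assert (Hr0 : r <> 0) by lra.
      replace (RtoC 0) with (/ r * RtoC 0)%C by C_ring.
      eapply is_RInt_ext; [| apply is_RInt_Cmult, (is_RInt_circle_z_deriv U K K' r HK)].
      + intros th _. cbv beta. set (w := K' (circ r th)).
        rewrite circ_scale. C_field. intros E. apply Hr0. now injection E.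
      + intros th. apply HU, Hr. }
  intros H1 H2. destruct (Rtotal_order r1 r2) as [Hlt | [-> | Hgt]].
  - apply eq_is_derive; [intros t Ht; apply Hder; lra | exact Hlt].
  - reflexivity.
  - symmetry. apply eq_is_derive; [intros t Ht; apply Hder; lra | exact Hgt].
Qed.

Definition avoids (ys : list C) (z : C) : Prop := forall y, In y ys -> z <> y.

Fixpoint node_poly_der (ys : list C) (z : C) : C :=
  match ys with
  | nil => RtoC 0
  | y :: ys' => (node_poly ys' z + (z - y) * node_poly_der ys' z)%C
  end.

Lemma holo_on_node_poly U ys : holo_on U (node_poly ys) (node_poly_der ys).
Proof.
  induction ys as [|y ys IH]; [apply holo_on_const |].
  apply (holo_on_ext U _
           (fun z => (RtoC 1 + RtoC 0) * node_poly ys z + (z - y) * node_poly_der ys z)%C).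
  - exact (holo_on_mult U _ _ _ _
             (holo_on_plus U _ _ _ _ (holo_on_id U) (holo_on_const U (- y)%C)) IH).
  - intros z. cbn [node_poly_der]. C_ring.
Qed.

Lemma node_poly_neq_0 ys z : avoids ys z -> node_poly ys z <> RtoC 0.
Proof.
  induction ys as [|y ys IH]; simpl; intros H.
  - apply C1_nz.
  - apply Cmult_neq_0.
    + apply Cminus_eq_contra, H. now left.
    + apply IH. intros w Hw. apply H. now right.
Qed.

Lemma node_poly_app ys y z : node_poly (ys ++ y :: nil) z = (node_poly ys z * (z - y))%C.
Proof. induction ys as [|w ys IH]; simpl; [| rewrite IH]; C_ring. Qed.

Lemma node_poly_der_app ys y z :
  node_poly_der (ys ++ y :: nil) z = (node_poly_der ys z * (z - y) + node_poly ys z)%C.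
Proof. induction ys as [|w ys IH]; simpl; [| rewrite IH, node_poly_app]; C_ring. Qed.

Lemma avoids_seq (x : nat -> C) q z :
  (forall j, (j <= q)%nat -> z <> x j) -> avoids (map x (seq 0 (S q))) z.
Proof. intros H y Hy. apply in_map_iff in Hy as [j [<- Hj]]. apply in_seq in Hj. apply H. lia. Qed.

(* The logarithmic derivative of [node_poly], via [x_j / (z - x_j) = z / (z - x_j) - 1]. *)
Lemma sum_node_ratio (x : nat -> C) q z :
  (forall j, (j <= q)%nat -> z <> x j) ->
  sum_n (fun j => x j / (z - x j))%C q =
  (z * node_poly_der (map x (seq 0 (S q))) z / node_poly (map x (seq 0 (S q))) z
   - INR (S q))%C.
Proof.
  induction q as [|q IH]; intros H.
  - rewrite sum_O. simpl. assert (Hz := Cminus_eq_contra _ _ (H O (le_n O))).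
    C_field. auto.
  - rewrite sum_n_C_Sn, IH by (intros j Hj; apply H; lia).
    assert (HP := node_poly_neq_0 _ _ (avoids_seq x q z (fun j Hj => H j (le_S _ _ Hj)))).
    assert (Hz := Cminus_eq_contra _ _ (H (S q) (le_n _))).
    rewrite (seq_S (S q)), map_app. change (map x ((0 + S q)%nat :: nil)) with (x (S q) :: nil).
    rewrite node_poly_app, node_poly_der_app, (S_INR (S q)), RtoC_plus.
    C_field. now split.
Qed.

Definition node_max (ys : list C) : R := fold_right (fun y m => Rmax (Cmod y) m) 0 ys.

Lemma node_max_bounds ys :
  0 <= node_max ys <= fold_right (fun y acc => Cmod y + acc) 0 ys.
Proof.
  induction ys as [|y ys IH]; simpl; [lra |].
  assert (Hy := Cmod_ge_0 y).
  split; [apply (Rle_trans _ (Cmod y)); [exact Hy | apply Rmax_l] |].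
  apply Rmax_lub; lra.
Qed.

Lemma node_max_lt_dd_radius ys : node_max ys < dd_radius ys.
Proof. unfold dd_radius. pose proof (node_max_bounds ys). lra. Qed.

Lemma Cmod_le_node_max ys y : In y ys -> Cmod y <= node_max ys.
Proof.
  induction ys as [|w ys IH]; simpl; [tauto |].
  intros [-> | Hy]; [apply Rmax_l |].
  apply (Rle_trans _ (node_max ys)); [now apply IH | apply Rmax_r].
Qed.

Lemma node_max_lt ys r :
  0 < r -> (forall y, In y ys -> Cmod y < r) -> node_max ys < r.
Proof.
  intros Hr. induction ys as [|w ys IH]; simpl; intros H; [exact Hr |].
  apply Rmax_lub_lt; [apply H; now left | apply IH; intros y Hy; apply H; now right].
Qed.

Lemma circ_avoids ys r th : node_max ys < r -> avoids ys (circ r th).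
Proof.
  intros Hr y Hy E. pose proof (Cmod_le_node_max ys y Hy) as Hle.
  rewrite <- E, Cmod_circ in Hle; pose proof (node_max_bounds ys); lra.
Qed.

(** * Divided differences of the exponential *)

Definition dd_kernel (t : R) (ys : list C) (z : C) : C :=
  (cexp (t * z) * z / node_poly ys z)%C.

Definition dd_kernel_dz (t : R) (ys : list C) (z : C) : C :=
  (cexp (t * z) * ((1 + t * z) / node_poly ys z
                   - z * node_poly_der ys z / (node_poly ys z * node_poly ys z)))%C.

Lemma holo_on_dd_kernel t ys : holo_on (avoids ys) (dd_kernel t ys) (dd_kernel_dz t ys).
Proof.
  apply (holo_on_ext _ _
    (fun z => ((RtoC 0 * z + RtoC t * RtoC 1) * cexp (t * z) * z + cexp (t * z) * RtoC 1)
                * / node_poly ys z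
              + cexp (t * z) * z
                * - (node_poly_der ys z / (node_poly ys z * node_poly ys z)))%C).
  - exact (holo_on_mult _ _ _ _ _
             (holo_on_mult _ _ _ _ _
                (holo_on_comp _ (fun _ => True) _ _ _ _
                   (holo_on_mult _ _ _ _ _ (holo_on_const _ (RtoC t)) (holo_on_id _))
                   (holo_on_cexp _) (fun _ _ => I))
                (holo_on_id _))
             (holo_on_inv _ _ _ (holo_on_node_poly _ ys) (node_poly_neq_0 ys))).
  - intros z. unfold dd_kernel_dz. C_ring.
Qed.

Lemma is_derive_C_dd_kernel_t ys z tau :
  is_derive_C (fun s => dd_kernel (- s) ys z) tau (- z * dd_kernel (- tau) ys z)%C.
Proof.
  eapply is_derive_C_val.
  - apply (is_derive_C_mult (fun s => cexp (RtoC (- s) * z) * z)%C); [| apply is_derive_C_const].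
    apply (is_derive_C_mult (fun s => cexp (RtoC (- s) * z))); [| apply is_derive_C_const].
    apply is_derive_C_cexp.
    apply (is_derive_C_mult (fun s => RtoC (- s))); [| apply is_derive_C_const].
    apply (is_derive_C_RtoC (fun s => - s) tau (-1)). auto_derive; auto; ring.
  - unfold dd_kernel. rewrite RtoC_opp. C_ring.
Qed.

Lemma continuity_2d_pt_C_dd_kernel ys r x th :
  avoids ys (circ r th) ->
  continuity_2d_pt_C (fun u v => dd_kernel (- u) ys (circ r v)) x th.
Proof.
  intros Hav. unfold dd_kernel, Cdiv.
  assert (Hc := continuity_2d_pt_C_circ_fixed r x th).
  repeat apply continuity_2d_pt_C_mult; try exact Hc.
  - apply continuity_2d_pt_C_cexp, continuity_2d_pt_C_mult; [| exact Hc].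
    apply continuity_2d_pt_C_RtoC, continuity_2d_pt_opp, continuity_2d_pt_id1.
  - apply continuity_2d_pt_C_inv; [| now apply node_poly_neq_0].
    exact (proj1 (proj2 (holo_on_node_poly _ ys) _ x th Hav Hc)).
Qed.

Lemma continuity_2d_pt_C_dd_kernel_dt ys r x th :
  avoids ys (circ r th) ->
  continuity_2d_pt_C (fun u v => - circ r v * dd_kernel (- u) ys (circ r v))%C x th.
Proof.
  intros Hav. apply continuity_2d_pt_C_mult.
  - apply continuity_2d_pt_C_opp, continuity_2d_pt_C_circ_fixed.
  - now apply continuity_2d_pt_C_dd_kernel.
Qed.

Lemma is_RInt_circle_int_dd_kernel t ys r :
  (forall th, avoids ys (circ r th)) ->
  @is_RInt C_R_NormedModule (fun th => dd_kernel t ys (circ r th)) 0 (2 * PI)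
           (circle_int (dd_kernel t ys) r).
Proof.
  intros Hav. apply (@RInt_correct C_R_CompleteNormedModule).
  rewrite <- (Ropp_involutive t).
  apply (ex_RInt_C_of_2d (fun u v => dd_kernel (- u) ys (circ r v))).
  intros th _. apply continuity_2d_pt_C_dd_kernel, Hav.
Qed.

Lemma exp_dd_as_circle_int t ys :
  exp_dd t ys = (RtoC (/ (2 * PI)) * circle_int (dd_kernel t ys) (dd_radius ys))%C.
Proof. reflexivity. Qed.

Lemma exp_dd_circle_int t ys r :
  0 < r -> (forall y, In y ys -> Cmod y < r) ->
  exp_dd t ys = (RtoC (/ (2 * PI)) * circle_int (dd_kernel t ys) r)%C.
Proof.
  intros Hr Hys. rewrite exp_dd_as_circle_int. f_equal.
  apply (circle_int_radius_indep (avoids ys) _ (dd_kernel_dz t ys) (node_max ys)).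
  - apply node_max_bounds.
  - apply holo_on_dd_kernel.
  - intros r' th Hr'. now apply circ_avoids.
  - apply node_max_lt_dd_radius.
  - now apply node_max_lt.
Qed.

Lemma is_derive_C_circle_int_dd_kernel ys r tau :
  (forall th, avoids ys (circ r th)) ->
  is_derive_C (fun s => circle_int (dd_kernel (- s) ys) r) tau
              (circle_int (fun z => - z * dd_kernel (- tau) ys z)%C r).
Proof.
  intros Hav.
  apply (is_derive_C_RInt_param (fun u th => dd_kernel (- u) ys (circ r th))
           (fun u th => - circ r th * dd_kernel (- u) ys (circ r th))%C 0 (2 * PI) tau 1).
  - lra.
  - intros u th _. apply is_derive_C_dd_kernel_t.
  - intros th _. apply continuity_2d_pt_C_dd_kernel_dt, Hav.
  - intros u th _ _. apply continuity_2d_pt_C_dd_kernel, Hav.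
Qed.

Lemma is_derive_C_exp_dd ys tau :
  is_derive_C (fun s => exp_dd (- s) ys) tau
    (RtoC (/ (2 * PI)) * circle_int (fun z => - z * dd_kernel (- tau) ys z) (dd_radius ys))%C.
Proof.
  eapply is_derive_C_val.
  - apply (is_derive_C_mult (fun _ => RtoC (/ (2 * PI)))
             (fun s => circle_int (dd_kernel (- s) ys) (dd_radius ys))).
    + apply is_derive_C_const.
    + apply is_derive_C_circle_int_dd_kernel. intros th.
      apply circ_avoids, node_max_lt_dd_radius.
  - C_ring.
Qed.

Section AppendedNode.

Variables (x : nat -> C) (q : nat).

Local Notation nodes := (map x (seq 0 (S q))).

Lemma in_nodes_append j y : (j <= q)%nat -> In y (nodes ++ x j :: nil) -> In y nodes.
Proof.
  intros Hj Hy. apply in_app_or in Hy as [Hy | [<- | []]]; [exact Hy |].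
  apply in_map, in_seq. lia.
Qed.

Lemma sum_dd_kernel_append tau z :
  avoids nodes z ->
  sum_n (fun j => x j * dd_kernel (- tau) (nodes ++ x j :: nil) z)%C q =
  (tau * (- z * dd_kernel (- tau) nodes z) - INR q * dd_kernel (- tau) nodes z
   - z * dd_kernel_dz (- tau) nodes z)%C.
Proof.
  intros Hav.
  assert (Hx : forall j, (j <= q)%nat -> z <> x j).
  { intros j Hj. apply Hav, in_map, in_seq. lia. }
  assert (HP := node_poly_neq_0 _ _ Hav).
  rewrite (sum_n_ext_loc _ (fun j => dd_kernel (- tau) nodes z * (x j / (z - x j)))%C).
  - rewrite sum_n_Cmult_l, sum_node_ratio by exact Hx.
    unfold dd_kernel, dd_kernel_dz. rewrite S_INR, RtoC_plus, !RtoC_opp. C_field. exact HP.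
  - intros j Hj. unfold dd_kernel. rewrite node_poly_app.
    assert (Hz := Cminus_eq_contra _ _ (Hx j Hj)). C_field. now split.
Qed.

Lemma sum_circle_int_dd_kernel_append tau r :
  node_max nodes < r ->
  sum_n (fun j => x j * circle_int (dd_kernel (- tau) (nodes ++ x j :: nil)) r)%C q =
  (tau * circle_int (fun z => - z * dd_kernel (- tau) nodes z) r
   - INR q * circle_int (dd_kernel (- tau) nodes) r)%C.
Proof.
  intros Hr.
  assert (Hav : forall th, avoids nodes (circ r th)) by (intros th; now apply circ_avoids).
  assert (HS : @is_RInt C_R_NormedModule
     (fun th => sum_n (fun j => x j * dd_kernel (- tau) (nodes ++ x j :: nil) (circ r th))%C q)
     0 (2 * PI)
     (sum_n (fun j => x j * circle_int (dd_kernel (- tau) (nodes ++ x j :: nil)) r)%C q)).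
  { apply is_RInt_C_sum. intros j Hj. apply is_RInt_circle_int_dd_kernel.
    intros th y Hy. now apply Hav, (in_nodes_append j). }
  assert (HB : @is_RInt C_R_NormedModule
     (fun th => - circ r th * dd_kernel (- tau) nodes (circ r th))%C 0 (2 * PI)
     (circle_int (fun z => - z * dd_kernel (- tau) nodes z)%C r)).
  { apply (@RInt_correct C_R_CompleteNormedModule).
    apply (ex_RInt_C_of_2d (fun u v => - circ r v * dd_kernel (- u) nodes (circ r v))%C).
    intros th _. apply continuity_2d_pt_C_dd_kernel_dt, Hav. }
  assert (Hrhs := is_RInt_Cminus _ _ _ _ _ _
    (is_RInt_Cminus _ _ _ _ _ _ (is_RInt_Cmult tau _ _ _ _ HB)
       (is_RInt_Cmult (INR q) _ _ _ _ (is_RInt_circle_int_dd_kernel (- tau) nodes r Hav)))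
    (is_RInt_circle_z_deriv _ _ _ r (holo_on_dd_kernel (- tau) nodes) Hav)).
  apply (@is_RInt_unique C_R_CompleteNormedModule) in HS, Hrhs.
  rewrite <- HS, <- (Cminus_0_r (_ - _)), <- Hrhs.
  apply (@RInt_ext C_R_CompleteNormedModule). intros th _. apply sum_dd_kernel_append, Hav.
Qed.

Lemma sum_exp_dd_append tau :
  sum_n (fun j => x j * exp_dd (- tau) (nodes ++ x j :: nil))%C q =
  (tau * (RtoC (/ (2 * PI))
          * circle_int (fun z => - z * dd_kernel (- tau) nodes z) (dd_radius nodes))
   - INR q * exp_dd (- tau) nodes)%C.
Proof.
  assert (Hr := node_max_lt_dd_radius nodes).
  rewrite (sum_n_ext_loc _ (fun j => RtoC (/ (2 * PI))
    * (x j * circle_int (dd_kernel (- tau) (nodes ++ x j :: nil)) (dd_radius nodes)))%C).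
  - rewrite sum_n_Cmult_l, sum_circle_int_dd_kernel_append by exact Hr.
    rewrite exp_dd_as_circle_int. C_ring.
  - intros j Hj. rewrite (exp_dd_circle_int _ _ (dd_radius nodes)); [C_ring | |].
    + pose proof (node_max_bounds nodes). lra.
    + intros y Hy. apply (Rle_lt_trans _ (node_max nodes)); [| exact Hr].
      now apply Cmod_le_node_max, (in_nodes_append j).
Qed.

End AppendedNode.

Theorem lemma2 (q : nat) (x : nat -> C) (tau : R) :
  exists D : C,
    @is_derive R_AbsRing C_R_NormedModule
      (fun s : R => exp_dd (- s) (map x (seq 0 (S q)))) tau D /\
    sum_n (fun j => Cmult (x j) (exp_dd (- tau) (map x (seq 0 (S q)) ++ x j :: nil))) q
    = Cminus (Cmult (RtoC tau) D)
             (Cmult (RtoC (INR q)) (exp_dd (- tau) (map x (seq 0 (S q))))).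
Proof.
  eexists. split.
  - apply is_derive_C_exp_dd.
  - apply sum_exp_dd_append.
Qed.
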